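(* Let $n\geqslant 2$ and let $\alpha$ be a partial cofinite isometry of $\mathbb{N}^n$. Then for every $i\in\{1,\ldots,n\}$ there exist a unique $j(i)\in\{1,\ldots,n\}$ and an integer $q(i)$ such that $(\mathbf{m}_i)\alpha=(\mathbf{m+q(i)})_{j(i)}$ for every integer $m\geqslant 2$ with $\mathbf{m}_i\in\operatorname{dom}\alpha$. Moreover, the map $i\mapsto j(i)$ is a permutation of the set $\{1,\ldots,n\}$.
   Context: $\mathbb{N}=\{1,2,3,\ldots\}$ and $\mathbb{N}^n$ carries the Euclidean metric $d$. A partial isometry of $\mathbb{N}^n$ is an injective partial map $\alpha\colon\mathbb{N}^n\rightharpoonup\mathbb{N}^n$ with $d((\mathbf{x})\alpha,(\mathbf{y})\alpha)=d(\mathbf{x},\mathbf{y})$ for all $\mathbf{x},\mathbf{y}\in\operatorname{dom}\alpha$; it is cofinite if $\mathbb{N}^n\setminus\operatorname{dom}\alpha$ and $\mathbb{N}^n\setminus\operatorname{ran}\alpha$ are finite. Maps are written on the right. For a positive integer $k$ and $j\in\{1,\ldots,n\}$, $\mathbf{k}_j\in\mathbb{N}^n$ denotes the point whose $j$-th coordinate is $k$ and all other coordinates equal $1$. *)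

From HB Require Import structures.
From mathcomp Require Import all_boot all_order all_algebra all_field.
Set Implicit Arguments. Unset Strict Implicit. Unset Printing Implicit Defensive.
Import Order.TTheory GRing.Theory Num.Theory.

(* Points of Z^n (coordinates as nat); a point lies in N^n = {1,2,...}^n
   when all coordinates are >= 1.  Coordinates are indexed by 'I_n,
   i.e. coordinate j in {1..n} of the paper is the ordinal j-1. *)
Definition pt (n : nat) := {ffun 'I_n -> nat}.

Definition inN (n : nat) (x : pt n) : Prop := forall j : 'I_n, 0 < x j.

Definition edist (n : nat) (x y : pt n) : algC :=
  sqrtC ((\sum_(j < n) (absz (Posz (x j) - Posz (y j))%R ^ 2))%:R)%R.

(* A partial map N^n -> N^n is a function into option; only points of N^n
   in which it is defined (Some) belong to the domain. *)
Definition dom (n : nat) (a : pt n -> option (pt n)) (x : pt n) : Prop :=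
  inN x /\ a x <> None.

Definition ran (n : nat) (a : pt n -> option (pt n)) (y : pt n) : Prop :=
  exists x, dom a x /\ a x = Some y.

Definition partial_isometry (n : nat) (a : pt n -> option (pt n)) : Prop :=
  (forall x y, dom a x -> a x = Some y -> inN y) /\
  (forall x x' y, dom a x -> dom a x' -> a x = Some y -> a x' = Some y -> x = x') /\
  (forall x x' y y', dom a x -> dom a x' -> a x = Some y -> a x' = Some y' ->
     edist y y' = edist x x').

Definition finite_set (n : nat) (P : pt n -> Prop) : Prop :=
  exists s : seq (pt n), forall x, P x -> x \in s.

Definition cofinite_partial_isometry (n : nat) (a : pt n -> option (pt n)) : Prop :=
  partial_isometry a /\
  finite_set (fun x => inN x /\ ~ dom a x) /\
  finite_set (fun y => inN y /\ ~ ran a y).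

Definition kpt (n : nat) (k : nat) (j : 'I_n) : pt n :=
  [ffun t => if t == j then k else 1%N].

Definition shifts_axis (n : nat) (a : pt n -> option (pt n)) (i j : 'I_n) (q : int)
  : Prop :=
  forall m : nat, (2 <= m)%N -> dom a (kpt m i) ->
    exists k : nat, (Posz k = Posz m + q)%R /\ a (kpt m i) = Some (kpt k j).

(* An isometry preserves, for every base point p, the inner products
   <x - p, y - p>, by polarization.  Take a base point P = (c,...,c) so far out
   that every point of N^n with a coordinate >= c lies in the domain and in the
   range of alpha.  The n unit steps P + e_k - P are sent to integer unit
   vectors, i.e. to +-e_(s k), and comparing inner products shows that
   alpha x and x differ along these axes by the same amount:
   (alpha x)_(s k) - (alpha P)_(s k) = +-(x_k - c).  Far out points force the
   sign to be +, and points with a coordinate 1 (in the domain, resp. in the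
   range) force (alpha P)_(s k) = c.  Hence (alpha x)_(s k) = x_k on the whole
   domain: alpha permutes the coordinates, with shift q(i) = 0. *)
From HB Require Import structures.
From mathcomp Require Import all_boot all_order all_algebra all_field.
From mathcomp Require Import zify ring.
From Stdlib Require Import Classical.
Set Implicit Arguments. Unset Strict Implicit. Unset Printing Implicit Defensive.
Import Order.TTheory GRing.Theory Num.Theory.
Local Open Scope ring_scope.

Lemma sum_sqr_eq1_int (I : finType) (u : I -> int) : \sum_i u i ^+ 2 = 1 ->
  exists t, u t ^+ 2 = 1 /\ forall i, i != t -> u i = 0.
Proof.
move=> sum1.
have [t ut_neq0] : exists t, u t != 0.
  apply/existsP; apply: contraT; rewrite negb_exists => /forallP u0.
  move: sum1; rewrite big1 // => i _.
  by move: (u0 i); rewrite negbK => /eqP ->; rewrite expr0n.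
exists t; move: sum1; rewrite (bigD1 t) //=.
have rest_ge0 : 0 <= \sum_(i | i != t) u i ^+ 2.
  by apply: sumr_ge0 => i _; exact: sqr_ge0.
have ut_ge1 : 1 <= u t ^+ 2.
  have : 0 < u t ^+ 2 by rewrite lt_def sqrf_eq0 ut_neq0 sqr_ge0.
  by move=> ?; lia.
move: rest_ge0 ut_ge1; set S := \sum_(i | i != t) _ => rest_ge0 ut_ge1 sum1.
have S0 : S = 0 by lia.
split=> [|i it]; first by lia.
have /eqP := psumr_eq0P (fun i _ => sqr_ge0 (u i)) S0 it.
by rewrite sqrf_eq0 => /eqP.
Qed.

Section Geometry.
Variable n : nat.
Implicit Types (x y p : pt n) (P : pt n -> Prop).

Definition sqdist x y : int := \sum_(j < n) (Posz (x j) - Posz (y j)) ^+ 2.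

Definition dotp x y p : int :=
  \sum_(j < n) (Posz (x j) - Posz (p j)) * (Posz (y j) - Posz (p j)).

Lemma edist_sqdist x y x' y' : edist x y = edist x' y' -> sqdist x y = sqdist x' y'.
Proof.
have sqdistE (z w : pt n) : Posz (\sum_(j < n) absz (Posz (z j) - Posz (w j)) ^ 2)%N = sqdist z w.
  rewrite /sqdist (big_morph Posz PoszD (erefl (Posz 0))).
  apply: eq_bigr => j _; rewrite PoszM !abszE -normrM ger0_norm -?expr2 //.
  exact: sqr_ge0.
rewrite /edist => /(congr1 (fun z => z ^+ 2)); rewrite !sqrtCK => /eqP.
by rewrite eqr_nat -!sqdistE => /eqP ->.
Qed.

Lemma dotp_polar x y p : 2 * dotp x y p = sqdist x p + sqdist y p - sqdist x y.
Proof.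
rewrite /dotp /sqdist mulr_sumr -big_split -sumrB /=.
by apply: eq_bigr => j _; ring.
Qed.

Lemma finite_compl_coord_large P : finite_set (fun x => inN x /\ ~ P x) ->
  exists c, forall x, inN x -> forall j, (c <= x j)%N -> P x.
Proof.
move=> [s sP]; exists (\sum_(y <- s) \sum_(k < n) y k).+1%N => x xN j xj_large.
apply: NNPP => notPx.
have xs : x \in s by exact: sP.
have : (x j <= \sum_(k < n) x k)%N by rewrite (bigD1 j) //= leq_addr.
by move: xj_large; rewrite (big_rem x xs) /=; lia.
Qed.

Lemma exists_ord_neq (k : 'I_n) : (2 <= n)%N -> exists j : 'I_n, j != k.
Proof.
move=> n_ge2; have n_gt0 : (0 < n)%N by lia.
have n_gt1 : (1 < n)%N by lia.
have [E|E] := eqVneq (Ordinal n_gt0) k; last by exists (Ordinal n_gt0).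
by exists (Ordinal n_gt1); rewrite -E.
Qed.

End Geometry.

Section CoordinatePermutation.
Variables (n : nat) (a : pt n -> option (pt n)) (c : nat).
Hypotheses (n_ge2 : (2 <= n)%N) (a_iso : partial_isometry a) (c_gt0 : (0 < c)%N).
Hypothesis dom_large : forall x j, inN x -> (c <= x j)%N -> dom a x.
Hypothesis ran_large : forall y j, inN y -> (c <= y j)%N -> ran a y.
Implicit Types (x y p : pt n) (j k : 'I_n).

Definition img x : pt n := odflt x (a x).

Lemma a_img x : dom a x -> a x = Some (img x).
Proof. by move=> [_]; rewrite /img; case: (a x). Qed.

Lemma img_inN x : dom a x -> inN (img x).
Proof. by move=> dx; apply: a_iso.1 _ _ dx (a_img dx). Qed.

Lemma sqdist_img x y : dom a x -> dom a y -> sqdist (img x) (img y) = sqdist x y.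
Proof. by move=> dx dy; apply/edist_sqdist/a_iso.2.2; rewrite // a_img. Qed.

Lemma dotp_img x y p : dom a x -> dom a y -> dom a p ->
  dotp (img x) (img y) (img p) = dotp x y p.
Proof. by move=> dx dy dp; apply: (@mulfI _ 2) => //; rewrite !dotp_polar !sqdist_img. Qed.

Definition base : pt n := [ffun _ => c].

Definition base_step k : pt n := [ffun j => (c + (j == k))%N].

Lemma dom_base : dom a base.
Proof.
have n_gt0 : (0 < n)%N by lia.
by apply: (dom_large (j := Ordinal n_gt0)) => [t|]; rewrite ffunE.
Qed.

Lemma dom_base_step k : dom a (base_step k).
Proof. by apply: (dom_large (j := k)) => [t|]; rewrite ffunE; lia. Qed.

Definition step_img k j : int := Posz (img (base_step k) j) - Posz (img base j).

Lemma base_step_sub k j : Posz (base_step k j) - Posz (base j) = Posz (j == k).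
Proof. by rewrite !ffunE PoszD addrAC subrr add0r. Qed.

Lemma step_img_unit k : \sum_j step_img k j ^+ 2 = 1.
Proof.
rewrite [LHS](sqdist_img (dom_base_step k) dom_base) /sqdist (bigD1 k) //=.
by rewrite big1 => [|j jk]; rewrite base_step_sub ?eqxx ?(negbTE jk).
Qed.

Lemma dotp_base_step x k : dotp x (base_step k) base = Posz (x k) - Posz c.
Proof.
rewrite /dotp (bigD1 k) //= base_step_sub eqxx mulr1 big1 ?addr0 ?ffunE // => j jk.
by rewrite base_step_sub (negbTE jk) mulr0.
Qed.

Section Axis.
Variable axis : 'I_n -> 'I_n.
Hypothesis step_img_axis : forall k, step_img k (axis k) ^+ 2 = 1.
Hypothesis step_img_off_axis : forall k j, j != axis k -> step_img k j = 0.

Lemma img_axis_scaled x k : dom a x ->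
  (Posz (img x (axis k)) - Posz (img base (axis k))) * step_img k (axis k) =
  Posz (x k) - Posz c.
Proof.
move=> dx; rewrite -dotp_base_step -(dotp_img dx (dom_base_step k) dom_base).
rewrite /dotp (bigD1 (axis k)) //= big1 ?addr0 // => j j_off.
by rewrite -/(step_img k j) step_img_off_axis // mulr0.
Qed.

Lemma step_img_axis_eq1 k : step_img k (axis k) = 1.
Proof.
pose p := img base (axis k).
pose x : pt n := [ffun j => if j == k then (c + p + 1)%N else c].
have dx : dom a x.
  by apply: (dom_large (j := k)) => [j|]; rewrite ffunE ?eqxx; [case: ifP|]; lia.
have := img_axis_scaled k dx; rewrite ffunE eqxx -/p.
(* with sign -1 the image coordinate would be c - (c + p + 1) + p < 0 *)
have /eqP := step_img_axis k; rewrite sqrf_eq1 => /orP[/eqP // | /eqP ->].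
by rewrite mulrN1; lia.
Qed.

Lemma img_axis_sub x k : dom a x ->
  Posz (img x (axis k)) - Posz (img base (axis k)) = Posz (x k) - Posz c.
Proof. by move=> dx; rewrite -(img_axis_scaled k dx) step_img_axis_eq1 mulr1. Qed.

(* Points of N^n with k-th (resp. axis k-th) coordinate 1 and all others c
   lie in the domain (resp. range), which bounds the base image both ways. *)
Lemma img_base_axis k : img base (axis k) = c.
Proof.
apply/eqP; rewrite eqn_leq; apply/andP; split.
  have [j j_off] := exists_ord_neq (axis k) n_ge2.
  pose y : pt n := [ffun t => if t == axis k then 1%N else c].
  have [x [dx ax]] : ran a y.
    by apply: (ran_large (j := j)) => [t|]; rewrite ffunE ?(negbTE j_off) //; case: ifP.
  have := img_axis_sub k dx; move: ax; rewrite a_img // => -[->].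
  by rewrite ffunE eqxx; have := dx.1 k; lia.
have [j jk] := exists_ord_neq k n_ge2.
pose x : pt n := [ffun t => if t == k then 1%N else c].
have dx : dom a x.
  by apply: (dom_large (j := j)) => [t|]; rewrite ffunE ?(negbTE jk) //; case: ifP.
have := img_axis_sub k dx; rewrite ffunE eqxx.
by have := img_inN dx (axis k); lia.
Qed.

Lemma img_axis x k : dom a x -> img x (axis k) = x k.
Proof. by move=> dx; have := img_axis_sub k dx; rewrite img_base_axis; lia. Qed.

End Axis.

Lemma exists_axis_map : exists s : 'I_n -> 'I_n, forall x k, dom a x -> img x (s k) = x k.
Proof.
have [s s_axis] := fin_all_exists (fun k => sum_sqr_eq1_int (step_img_unit k)).
exists s => x k; apply: img_axis => [l|l j]; [exact: (s_axis l).1 | exact: (s_axis l).2].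
Qed.

Section AxisMap.
Variable s : 'I_n -> 'I_n.
Hypothesis img_s : forall x k, dom a x -> img x (s k) = x k.

Lemma axis_map_inj : injective s.
Proof.
move=> k l skl; apply/eqP; apply: contraT => kl.
have := img_s l (dom_base_step k); rewrite -skl (img_s _ (dom_base_step k)).
by rewrite !ffunE eqxx eq_sym (negbTE kl); lia.
Qed.

Lemma img_kpt m i : dom a (kpt m i) -> a (kpt m i) = Some (kpt m (s i)).
Proof.
move=> dm; rewrite a_img //; congr Some; apply/ffunP => t.
have [sinv _ sK] := injF_bij axis_map_inj.
by rewrite -(sK t) img_s // !ffunE (inj_eq axis_map_inj).
Qed.

Lemma shifts_axis_map i : shifts_axis a i (s i) 0.
Proof. by move=> m _ dm; exists m; rewrite addr0 img_kpt. Qed.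

Lemma shifts_axis_unique i j q : shifts_axis a i j q -> j = s i.
Proof.
move=> shift; pose m := (c + 2 + absz q)%N.
have dm : dom a (kpt m i).
  by apply: (dom_large (j := i)) => [t|]; rewrite ffunE ?eqxx; [case: ifP|]; lia.
have [|k [mqk]] := shift m _ dm; first by lia.
rewrite img_kpt // => -[/(congr1 (fun f : pt n => f j))].
rewrite !ffunE eqxx; case: eqP => // _ km.
by move: mqk; rewrite -km /m; lia.
Qed.

End AxisMap.
End CoordinatePermutation.

Theorem lemma2p6 (n : nat) (a : pt n -> option (pt n)) :
  (2 <= n)%N -> cofinite_partial_isometry a ->
  exists (j : 'I_n -> 'I_n) (q : 'I_n -> int),
    (forall i, shifts_axis a i (j i) (q i)) /\
    (forall i (j' : 'I_n) (q' : int), shifts_axis a i j' q' -> j' = j i) /\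
    bijective j.
Proof.
move=> n_ge2 [a_iso [dom_cof ran_cof]].
have [c1 dom_c1] := finite_compl_coord_large (P := dom a) dom_cof.
have [c2 ran_c2] := finite_compl_coord_large (P := ran a) ran_cof.
pose c := (maxn c1 c2).+1.
have c_gt0 : (0 < c)%N by [].
have dom_c x j : inN x -> (c <= x j)%N -> dom a x.
  by move=> xN xj; apply: (dom_c1 _ xN j); lia.
have ran_c y j : inN y -> (c <= y j)%N -> ran a y.
  by move=> yN yj; apply: (ran_c2 _ yN j); lia.
have [s img_s] := exists_axis_map n_ge2 a_iso c_gt0 dom_c ran_c.
exists s, (fun=> 0); split; [|split].
- by move=> i; exact: (shifts_axis_map n_ge2 c_gt0 dom_c img_s (i := i)).
- by move=> i; exact: (shifts_axis_unique n_ge2 c_gt0 dom_c img_s (i := i)).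
- exact: injF_bij (axis_map_inj n_ge2 c_gt0 dom_c img_s).
Qed.
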